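(* Let $N=[n]$, let $v:2^N\to\mathbb{R}_+$ be a monotone submodular valuation with $v(\emptyset)=0$, and let $X$ be a decision map for $v$. Then for any pure Nash equilibrium $p$ of the pricing game defined by $v$ and $X$, we have $p_i\ge v(\{i\}\mid N\setminus\{i\})$ for every $i\in N$. Moreover, if $S=X(p)$ and $i\notin S$, then $v(\{i\}\mid S)=0$.
   Context: Pricing game: $N=[n]$ services, service $i$ controlled by seller $i$. Buyer valuation $v:2^N\to\mathbb{R}_+$, monotone, $v(\emptyset)=0$; submodular means $v(S\cup T)+v(S\cap T)\le v(S)+v(T)$ for all $S,T$. Marginal value: $v(T\mid S)=v(S\cup T)-v(S)$. For $p\in\mathbb{R}^n_+$, $p(S)=\sum_{j\in S}p_j$, $D(v;p)=\arg\max_{S\subseteq N}(v(S)-p(S))$. A decision map is $X:\mathbb{R}^n_+\to2^N$ with $X(p)\in D(v;p)$ for all $p$. Seller $i$'s utility is $u_i(p)=p_i\mathbf{1}\{i\in X(p)\}$; a pure Nash equilibrium is a $p$ with $u_i(p)\ge u_i(p_i',p_{-i})$ for all $i$ and $p_i'\in\mathbb{R}_+$. *)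

From mathcomp Require Import all_boot all_order all_algebra.
Set Implicit Arguments. Unset Strict Implicit. Unset Printing Implicit Defensive.
Import Order.TTheory GRing.Theory Num.Theory.
Local Open Scope ring_scope.

(* Services are 'I_n; bundles are {set 'I_n}; a price vector is p : 'I_n -> R
   (nonnegativity imposed separately via [nonneg_prices]). *)

Section Pricing.
Variables (R : realFieldType) (n : nat).
Implicit Types (v : {set 'I_n} -> R) (p : 'I_n -> R) (S T : {set 'I_n}).

Definition nonneg_valuation v := forall S, 0 <= v S.
Definition monotone v := forall S T, S \subset T -> v S <= v T.
Definition submodular v := forall S T, v (S :|: T) + v (S :&: T) <= v S + v T.

(* marginal value v(T | S) = v(S u T) - v(S) *)
Definition marg v T S := v (S :|: T) - v S.

Definition price_of p S := \sum_(j in S) p j.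

Definition nonneg_prices p := forall i, 0 <= p i.

Definition in_demand v p S := forall T, v T - price_of p T <= v S - price_of p S.

Definition decision_map v (X : ('I_n -> R) -> {set 'I_n}) :=
  forall p, nonneg_prices p -> in_demand v p (X p).

Definition deviate p (i : 'I_n) (q : R) : 'I_n -> R :=
  fun j => if j == i then q else p j.

Definition seller_utility (X : ('I_n -> R) -> {set 'I_n}) p (i : 'I_n) : R :=
  if i \in X p then p i else 0.

Definition pure_NE (X : ('I_n -> R) -> {set 'I_n}) p :=
  nonneg_prices p /\
  forall i q, 0 <= q -> seller_utility X (deviate p i q) i <= seller_utility X p i.

End Pricing.

From mathcomp Require Import all_boot all_order all_algebra.
From mathcomp Require Import lra.
Set Implicit Arguments. Unset Strict Implicit. Unset Printing Implicit Defensive.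
Import Order.TTheory GRing.Theory Num.Theory.
Local Open Scope ring_scope.

(* If seller i deviates to a price q at which every bundle without i is
   strictly worse for the buyer than some other bundle, then i is sold and
   earns q; at an equilibrium this cannot beat i's current utility.

   For p_i: by submodularity v({i} | T) >= v({i} | N \ {i}) for every T not
   containing i, so any q strictly between p_i and v({i} | N \ {i}) is such a
   price, and would earn more than p_i >= u_i(p).  For the second claim, with
   S = X(p) and i outside S, the price q = v({i} | S) / 2 is such a price: the
   bundle S + i beats S, which beats every bundle without i; so q <= u_i(p) = 0. *)

Section Deviation.
Variables (R : realFieldType) (n : nat).
Implicit Types (v : {set 'I_n} -> R) (p : 'I_n -> R) (S T : {set 'I_n}).

Lemma margE v S (i : 'I_n) : marg v [set i] S = v (i |: S) - v S.
Proof. by rewrite /marg setUC. Qed.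

Lemma marg_ge0 v S (i : 'I_n) : monotone v -> 0 <= marg v [set i] S.
Proof. by move=> mon; rewrite subr_ge0; apply/mon/subsetUl. Qed.

Lemma submodular_marg_setC_le v T (i : 'I_n) : submodular v -> i \notin T ->
  marg v [set i] (~: [set i]) <= marg v [set i] T.
Proof.
move=> sub iT; rewrite !margE setUCr.
have UT : (i |: T) :|: ~: [set i] = [set: 'I_n].
  by rewrite -setUA (setUC T) setUA setUCr setTU.
have IT : (i |: T) :&: ~: [set i] = T.
  apply/setP => j; rewrite !inE.
  by case: eqP => [->|] /=; rewrite ?andbT // (negbTE iT).
by have := sub (i |: T) (~: [set i]); rewrite UT IT; lra.
Qed.

Lemma price_of_deviate p (i : 'I_n) q T :
  i \notin T -> price_of (deviate p i q) T = price_of p T.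
Proof.
move=> iT; apply: eq_bigr => j jT; rewrite /deviate.
by case: eqP => // ji; rewrite -ji jT in iT.
Qed.

Lemma price_of_setU1 p (i : 'I_n) T :
  i \notin T -> price_of p (i |: T) = p i + price_of p T.
Proof. by move=> iT; rewrite /price_of big_setU1. Qed.

Lemma price_of_deviate_setU1 p (i : 'I_n) q T :
  i \notin T -> price_of (deviate p i q) (i |: T) = q + price_of p T.
Proof.
by move=> iT; rewrite price_of_setU1 // price_of_deviate // /deviate eqxx.
Qed.

Lemma nonneg_prices_deviate p (i : 'I_n) q :
  nonneg_prices p -> 0 <= q -> nonneg_prices (deviate p i q).
Proof. by move=> np q0 j; rewrite /deviate; case: eqP. Qed.

Lemma pure_NE_sure_sale_le v (X : ('I_n -> R) -> {set 'I_n}) p (i : 'I_n) q :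
  decision_map v X -> pure_NE X p -> 0 <= q ->
  (forall T, i \notin T -> exists U,
     v T - price_of (deviate p i q) T < v U - price_of (deviate p i q) U) ->
  q <= seller_utility X p i.
Proof.
move=> dX [np NE] q0 dominated.
have sold : i \in X (deviate p i q).
  apply/negPn/negP => /dominated [U ltU].
  have := dX _ (nonneg_prices_deviate i np q0) U.
  by rewrite leNgt ltU.
by have := NE i q q0; rewrite /seller_utility sold /deviate eqxx.
Qed.

End Deviation.

Theorem mainTheorem5 (R : realFieldType) (n : nat)
  (v : {set 'I_n} -> R) (X : ('I_n -> R) -> {set 'I_n}) (p : 'I_n -> R) :
  nonneg_valuation v -> v set0 = 0 -> monotone v -> submodular v ->
  decision_map v X ->
  pure_NE X p ->
  (forall i : 'I_n, marg v [set i] (~: [set i]) <= p i) /\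
  (forall i : 'I_n, i \notin X p -> marg v [set i] (X p) = 0).
Proof.
move=> _ _ mon sub dX NE; have np := NE.1; split.
- move=> i; set m := marg v [set i] (~: [set i]).
  rewrite leNgt; apply/negP => lt_pm.
  have [q lt_pq lt_qm] : exists2 q, p i < q & q < m.
    by exists ((p i + m) / 2); case: (midf_lt lt_pm).
  have q_gt0 : 0 < q := le_lt_trans (np i) lt_pq.
  have : q <= seller_utility X p i.
    apply: (pure_NE_sure_sale_le dX NE (ltW q_gt0)) => T iT; exists (i |: T).
    have := submodular_marg_setC_le sub iT; rewrite (margE _ T) -/m.
    by rewrite price_of_deviate_setU1 // price_of_deviate //; lra.
  by rewrite /seller_utility; case: (i \in X p); rewrite leNgt ?lt_pq ?q_gt0.
- move=> i iS; set S := X p; set d := marg v [set i] S.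
  apply/eqP; rewrite eq_le marg_ge0 // andbT leNgt; apply/negP => d_gt0.
  have q_gt0 : 0 < d / 2 by rewrite divr_gt0.
  have : d / 2 <= seller_utility X p i.
    apply: (pure_NE_sure_sale_le dX NE (ltW q_gt0)) => T iT; exists (i |: S).
    have := dX p np T; have := margE v S i.
    by rewrite -/S -/d price_of_deviate_setU1 // !price_of_deviate //; lra.
  by rewrite /seller_utility -/S (negbTE iS) leNgt q_gt0.
Qed.
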